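(* There is an absolute constant $C$ such that for every $n\geq 1$, every $w\in\{0,1\}^n$, and every nonempty set $\mathcal{B}\subseteq\{0,1\}^n\setminus\{w\}$, there is a first-order sentence over $\tau_{\mathsf{string}}$ with at most $\log_2(n)+\log_2|\mathcal{B}|+C$ quantifiers that is true in $\mathbf{B}_w$ and false in $\mathbf{B}_{w'}$ for every $w'\in\mathcal{B}$.
   Context: Vocabulary $\tau_{\mathsf{string}}=\langle <, S;\ \mathsf{min},\mathsf{max}\rangle$ with $<$ binary, $S$ unary, $\mathsf{min},\mathsf{max}$ constants. A string $w=w_1\cdots w_n\in\{0,1\}^n$ ($n\geq 1$) is encoded by the structure $\mathbf{B}_w$ with universe $\{1,\dots,n\}$, $<$ the usual order, $S=\{i: w_i=1\}$, $\mathsf{min}=1$, $\mathsf{max}=n$. The number of quantifiers is the number of quantifier occurrences. *)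

From mathcomp Require Import all_boot.
From Stdlib Require Import Reals.
Set Implicit Arguments. Unset Strict Implicit. Unset Printing Implicit Defensive.

Inductive term : Type :=
| TVar : nat -> term
| TMin : term
| TMax : term.

Inductive formula : Type :=
| FLt  : term -> term -> formula
| FEq  : term -> term -> formula
| FS   : term -> formula
| FNot : formula -> formula
| FAnd : formula -> formula -> formula
| FOr  : formula -> formula -> formula
| FEx  : nat -> formula -> formula
| FAll : nat -> formula -> formula.

Fixpoint nquant (f : formula) : nat :=
  match f with
  | FLt _ _ | FEq _ _ | FS _ => 0
  | FNot g => nquant g
  | FAnd g h | FOr g h => nquant g + nquant h
  | FEx _ g | FAll _ g => (nquant g).+1
  end.

Definition term_vars (t : term) : seq nat :=
  match t with TVar v => [:: v] | _ => [::] end.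

Fixpoint free_vars (f : formula) : seq nat :=
  match f with
  | FLt t1 t2 | FEq t1 t2 => term_vars t1 ++ term_vars t2
  | FS t => term_vars t
  | FNot g => free_vars g
  | FAnd g h | FOr g h => free_vars g ++ free_vars h
  | FEx x g | FAll x g => filter (fun y => y != x) (free_vars g)
  end.

Definition sentence (f : formula) : Prop := free_vars f = [::].

(* The structure B_w for w = w_1 ... w_n : universe {1,...,n}, usual order,
   S = {i | w_i = 1}, min = 1, max = n.  The letter w_i is nth false w (i-1). *)
Section Sem.
Variables (n : nat) (w : n.-tuple bool).

Definition eval_term (a : nat -> nat) (t : term) : nat :=
  match t with TVar v => a v | TMin => 1 | TMax => n end.

Definition upd (a : nat -> nat) (x i : nat) : nat -> nat :=
  fun y => if y == x then i else a y.

Fixpoint sat (a : nat -> nat) (f : formula) : Prop :=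
  match f with
  | FLt t1 t2 => eval_term a t1 < eval_term a t2
  | FEq t1 t2 => eval_term a t1 = eval_term a t2
  | FS t => nth false w (eval_term a t).-1 = true
  | FNot g => ~ sat a g
  | FAnd g h => sat a g /\ sat a h
  | FOr g h => sat a g \/ sat a h
  | FEx x g => exists i, 1 <= i <= n /\ sat (upd a x i) g
  | FAll x g => forall i, 1 <= i <= n -> sat (upd a x i) g
  end.

(* truth of a sentence in B_w (assignments are irrelevant for sentences;
   we evaluate under the assignment constantly equal to 1 = min) *)
Definition models (f : formula) : Prop := sat (fun _ => 1) f.
End Sem.

Definition log2R (x : R) : R := (ln x / ln 2)%R.

(* To separate w from every w' in B, fix for each w' a position where the two words differ and
   assert that w carries its own letter at each of these positions.  Position q + 1 is defined by
   "x - min >= q and max - x >= n - 1 - q", and "y - x >= t" costs only about log t quantifiers: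
   it holds iff some z in (x, y) has z - x >= t/2 and y - z >= t - t/2, or dually iff every z in
   [x, y) is far enough from x or from y.  The two halves reuse one block of alternating
   quantifiers, because the guards placing z in either half are mutually exclusive, so the block
   has a single quantifier per halving step.  The same sharing puts the |B| letter tests under one
   prefix: log |B| universally quantified selector variables, each equal to min or not, choose the
   test to be checked.  This gives log n + log |B| + O(1) quantifiers. *)

From mathcomp Require Import all_boot.
From Stdlib Require Import Reals Lra Classical.
From mathcomp Require Import zify.
From Stdlib Require Import Lia.
Set Implicit Arguments. Unset Strict Implicit. Unset Printing Implicit Defensive.

(* Importing [Reals] rebinds [^] on [nat] to [Nat.pow]; restore [expn]. *)
Local Notation "m ^ n" := (expn m n) : nat_scope.

Definition term_vars_in (P : pred nat) (t : term) : bool :=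
  if t is TVar v then P v else true.

Fixpoint vars_in (P : pred nat) (f : formula) : bool :=
  match f with
  | FLt t1 t2 | FEq t1 t2 => term_vars_in P t1 && term_vars_in P t2
  | FS t => term_vars_in P t
  | FNot g | FEx _ g | FAll _ g => vars_in P g
  | FAnd g h | FOr g h => vars_in P g && vars_in P h
  end.

Lemma term_vars_in_sub (P Q : pred nat) t :
  subpred P Q -> term_vars_in P t -> term_vars_in Q t.
Proof. by move=> PQ; case: t => //= v /PQ. Qed.

Lemma vars_in_sub (P Q : pred nat) f : subpred P Q -> vars_in P f -> vars_in Q f.
Proof.
move=> PQ; have sub t : term_vars_in P t -> term_vars_in Q t := term_vars_in_sub PQ.
elim: f => //=; try by move=> ? ? /andP[/sub -> /sub ->].
- by move=> g IHg h IHh /andP[/IHg -> /IHh ->].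
- by move=> g IHg h IHh /andP[/IHg -> /IHh ->].
Qed.

Lemma free_vars_in (P : pred nat) f v : vars_in P f -> v \in free_vars f -> P v.
Proof.
have term_case t : term_vars_in P t -> v \in term_vars t -> P v.
  by case: t => //= x Px; rewrite inE => /eqP ->.
elim: f => /=;
  try by move=> t1 t2 /andP[h1 h2]; rewrite mem_cat => /orP[/(term_case _ h1)|/(term_case _ h2)].
- exact: term_case.
- by [].
- by move=> g IHg h IHh /andP[/IHg h1 /IHh h2]; rewrite mem_cat => /orP[].
- by move=> g IHg h IHh /andP[/IHg h1 /IHh h2]; rewrite mem_cat => /orP[].
- by move=> x g IH /IH h; rewrite mem_filter => /andP[_].
- by move=> x g IH /IH h; rewrite mem_filter => /andP[_].
Qed.

Section Coincidence.
Variables (n : nat) (z : n.-tuple bool).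

Lemma sat_agree (P : pred nat) f a b :
  {in P, a =1 b} -> vars_in P f -> sat z a f <-> sat z b f.
Proof.
have eval_agree a' b' t : {in P, a' =1 b'} -> term_vars_in P t ->
    eval_term n a' t = eval_term n b' t.
  by move=> ab; case: t => //= v /ab.
have upd_agree a' b' x i : {in P, a' =1 b'} -> {in P, upd a' x i =1 upd b' x i}.
  by move=> ab v Pv; rewrite /upd; case: eqP => // _; exact: ab.
elim: f a b => /=.
- by move=> t1 t2 a b ab /andP[h1 h2]; rewrite (eval_agree _ _ _ ab h1) (eval_agree _ _ _ ab h2).
- by move=> t1 t2 a b ab /andP[h1 h2]; rewrite (eval_agree _ _ _ ab h1) (eval_agree _ _ _ ab h2).
- by move=> t a b ab h; rewrite (eval_agree _ _ _ ab h).
- by move=> g IH a b ab h; rewrite (IH a b ab h).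
- by move=> g IHg h IHh a b ab /andP[hg hh]; rewrite (IHg a b ab hg) (IHh a b ab hh).
- by move=> g IHg h IHh a b ab /andP[hg hh]; rewrite (IHg a b ab hg) (IHh a b ab hh).
- move=> x g IH a b ab h.
  by split=> -[i [hi s]]; exists i; split=> //; move: s; rewrite (IH _ _ (upd_agree _ _ x i ab) h).
- move=> x g IH a b ab h.
  by split=> s i hi; move: (s i hi); rewrite (IH _ _ (upd_agree _ _ x i ab) h).
Qed.

Lemma upd_eq a x i : upd a x i x = i.
Proof. by rewrite /upd eqxx. Qed.

Lemma sat_upd_unused x i a f : vars_in (predC1 x) f -> sat z (upd a x i) f <-> sat z a f.
Proof.
by apply: sat_agree => v; rewrite /upd /= => /negbTE ->.
Qed.

End Coincidence.

Definition prefix (qs : seq (bool * nat)) (f : formula) : formula :=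
  foldr (fun q g => if q.1 then FAll q.2 g else FEx q.2 g) f qs.

Definition avoids (qs : seq (bool * nat)) (f : formula) : bool :=
  vars_in (fun v => v \notin map snd qs) f.

Definition FImp (p q : formula) : formula := FOr (FNot p) q.

Lemma nquant_prefix qs f : nquant (prefix qs f) = size qs + nquant f.
Proof. by elim: qs => //= [[[] x]] qs /= ->. Qed.

Lemma vars_in_prefix P qs f : vars_in P (prefix qs f) = vars_in P f.
Proof. by elim: qs => //= [[[] x]] qs. Qed.

Lemma free_vars_prefix qs f :
  free_vars (prefix qs f) = [seq v <- free_vars f | v \notin map snd qs].
Proof.
elim: qs => [|[b x] qs IH] /=; first by rewrite filter_predT.
by case: b; rewrite /= IH -filter_predI; apply: eq_filter => v /=; rewrite inE negb_or andbC.
Qed.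

Lemma avoids_cons q qs f : avoids (q :: qs) f -> vars_in (predC1 q.2) f && avoids qs f.
Proof.
by move=> h; apply/andP; split; apply: vars_in_sub h => v /=; rewrite inE negb_or => /andP[].
Qed.

Section Prefixes.
Variables (n : nat) (z : n.-tuple bool).

Notation sat := (sat z).

Lemma sat_prefix_congr qs N N' a :
  (forall b, {in [predC map snd qs], b =1 a} -> sat b N <-> sat b N') ->
  sat a (prefix qs N) <-> sat a (prefix qs N').
Proof.
elim: qs a => [|[c x] qs IH] a NN' /=; first exact: NN'.
have NN'i i : sat (upd a x i) (prefix qs N) <-> sat (upd a x i) (prefix qs N').
  apply: IH => b ba; apply: NN' => v; rewrite !inE negb_or => /andP[vx vqs].
  by rewrite ba ?inE // /upd (negbTE vx).
case: c {NN'} => /=.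
  by split=> h i hi; apply/NN'i; apply: h.
by split=> -[i [hi h]]; exists i; split=> //; apply/NN'i.
Qed.

Hypothesis n_gt0 : 0 < n.

Lemma one_in_dom : 1 <= 1 <= n.
Proof. by rewrite leqnn n_gt0. Qed.

Lemma sat_prefix_and qs a N S : avoids qs S ->
  sat a (prefix qs (FAnd N S)) <-> sat a (prefix qs N) /\ sat a S.
Proof.
elim: qs a => [|[c x] qs IH] a // /avoids_cons /andP[Sx Sqs] /=.
have sat_at i : sat (upd a x i) (prefix qs (FAnd N S)) <-> sat (upd a x i) (prefix qs N) /\ sat a S.
  by rewrite IH // (sat_upd_unused _ _ _ Sx).
case: c {Sx} => /=; split.
- by move=> h; split=> [i hi|]; [case/sat_at: (h i hi) | case/sat_at: (h 1 one_in_dom)].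
- by move=> [h s] i hi; apply/sat_at; split; [apply: h|].
- by move=> [i [hi /sat_at [h s]]]; split=> //; exists i.
- by move=> [[i [hi h]] s]; exists i; split=> //; apply/sat_at.
Qed.

Lemma sat_prefix_guarded_and qs a A P1 P2 X1 X2 :
  avoids qs A -> avoids qs P1 -> avoids qs P2 -> (forall b, sat b P1 -> ~ sat b P2) ->
  sat a (prefix qs (FAnd A (FAnd (FImp P1 X1) (FImp P2 X2)))) <->
  sat a A /\ (sat a P1 -> sat a (prefix qs X1)) /\ (sat a P2 -> sat a (prefix qs X2)).
Proof.
elim: qs a => [|[c x] qs IH] a hA h1 h2 excl /=.
  by have := classic (sat a P1); have := classic (sat a P2); tauto.
case/avoids_cons/andP: hA => Ax Aqs; case/avoids_cons/andP: h1 => P1x P1qs.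
case/avoids_cons/andP: h2 => P2x P2qs.
have sat_at i : sat (upd a x i) (prefix qs (FAnd A (FAnd (FImp P1 X1) (FImp P2 X2)))) <->
    sat a A /\ (sat a P1 -> sat (upd a x i) (prefix qs X1)) /\
    (sat a P2 -> sat (upd a x i) (prefix qs X2)).
  by rewrite IH // (sat_upd_unused _ _ _ Ax) (sat_upd_unused _ _ _ P1x) (sat_upd_unused _ _ _ P2x).
case: c {Ax P1x P2x} => /=; split.
- move=> h; have [sA _] := (sat_at 1).1 (h 1 one_in_dom).
  by split=> //; split=> hp i hi; have [_ [e1 e2]] := (sat_at i).1 (h i hi); auto.
- by move=> [sA [e1 e2]] i hi; apply/sat_at; split=> //; split=> hp; [apply: e1 | apply: e2].
- move=> [i [hi /sat_at [sA [e1 e2]]]].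
  by split=> //; split=> hp; exists i; split=> //; auto.
- move=> [sA [e1 e2]].
  have [p1|np1] := classic (sat a P1).
    have [i [hi s]] := e1 p1; exists i; split=> //; apply/sat_at.
    by split=> //; split=> // p2; case: (excl _ p1 p2).
  have [p2|np2] := classic (sat a P2).
    have [i [hi s]] := e2 p2; exists i; split=> //; apply/sat_at.
    by split=> //; split.
  by exists 1; split; [exact: one_in_dom | apply/sat_at].
Qed.

Lemma sat_prefix_guarded_or qs a A R1 R2 X1 X2 :
  avoids qs A -> avoids qs R1 -> avoids qs R2 -> (forall b, sat b R1 -> ~ sat b R2) ->
  sat a (prefix qs (FOr A (FOr (FAnd R1 X1) (FAnd R2 X2)))) <->
  sat a A \/ (sat a R1 /\ sat a (prefix qs X1)) \/ (sat a R2 /\ sat a (prefix qs X2)).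
Proof.
elim: qs a => [|[c x] qs IH] a hA h1 h2 excl //=.
case/avoids_cons/andP: hA => Ax Aqs; case/avoids_cons/andP: h1 => R1x R1qs.
case/avoids_cons/andP: h2 => R2x R2qs.
have sat_at i : sat (upd a x i) (prefix qs (FOr A (FOr (FAnd R1 X1) (FAnd R2 X2)))) <->
    sat a A \/ (sat a R1 /\ sat (upd a x i) (prefix qs X1)) \/
    (sat a R2 /\ sat (upd a x i) (prefix qs X2)).
  by rewrite IH // (sat_upd_unused _ _ _ Ax) (sat_upd_unused _ _ _ R1x) (sat_upd_unused _ _ _ R2x).
case: c {Ax R1x R2x} => /=; split.
- move=> h; have [sA|nA] := classic (sat a A); first by left.
  have [r1|nr1] := classic (sat a R1).
    right; left; split=> // i hi.
    by case: ((sat_at i).1 (h i hi)) => [|[[]|[/(excl _ r1)]]].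
  have [r2|nr2] := classic (sat a R2).
    right; right; split=> // i hi.
    by case: ((sat_at i).1 (h i hi)) => [|[[]|[]]].
  by have := (sat_at 1).1 (h 1 one_in_dom); tauto.
- move=> H i hi; apply/sat_at.
  by case: H => [|[[r h]|[r h]]]; [left | right; left | right; right]; auto.
- move=> [i [hi /sat_at]] [sA|[[r s]|[r s]]]; first by left.
    by right; left; split=> //; exists i.
  by right; right; split=> //; exists i.
- case=> [sA|[[r [i [hi s]]]|[r [i [hi s]]]]].
  + by exists 1; split; [exact: one_in_dom | apply/sat_at; left].
  + by exists i; split=> //; apply/sat_at; right; left.
  + by exists i; split=> //; apply/sat_at; right; right.
Qed.

End Prefixes.

Fixpoint alt_block (k : nat) (c : bool) : seq (bool * nat) :=
  if k is k'.+1 then (c, k) :: alt_block k' (~~ c) else [::].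

Definition above (k : nat) : pred nat := fun v => k < v.

Lemma size_alt_block k c : size (alt_block k c) = k.
Proof. by elim: k c => //= k IH c; rewrite IH. Qed.

Lemma mem_alt_block k c (v : nat) : (v \in map snd (alt_block k c)) = (0 < v <= k).
Proof. by elim: k c => [|k IH] c /=; rewrite ?in_nil ?inE ?IH; lia. Qed.

Lemma avoids_alt_block k c f : vars_in (above k) f -> avoids (alt_block k c) f.
Proof. by apply: vars_in_sub => v; rewrite /above /= mem_alt_block; lia. Qed.

Lemma term_vars_in_above k t : term_vars_in (above k.+1) t -> term_vars_in (above k) t.
Proof. by apply: term_vars_in_sub => v; rewrite /above; lia. Qed.

(* The case [t = 0] holds even when [hi < lo]. *)
Definition dist_ge (t lo hi : nat) : Prop := t = 0 \/ lo + t <= hi.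

Definition all_cut_l (t : nat) : nat := if t <= 1 then 0 else t.+1 %/ 2.
Definition all_cut_r (t : nat) : nat := if t <= 1 then 0 else t.+1 - t.+1 %/ 2.

(* [all_cut_l t + all_cut_r t = t + 1]: every point of [lo, m) is far from [lo] or from [m]. *)
Lemma dist_ge_all_cut n t lo m : 1 <= lo -> m <= n ->
  dist_ge t lo m <-> dist_ge (minn t 1) lo m /\
     forall i, 1 <= i <= n -> lo <= i < m ->
       dist_ge (all_cut_l t) lo i \/ dist_ge (all_cut_r t) i m.
Proof.
rewrite /dist_ge => lo_ge1 m_le; case: (leqP t 1) => t_le.
  by rewrite /all_cut_l /all_cut_r t_le; split=> [H|[H _]]; [split=> [|i _ _]; [|left] | ]; lia.
rewrite /all_cut_l /all_cut_r (ltn_geF t_le).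
split=> [[t0|H]|[H1 H2]]; first lia.
  by split=> [|i _ /andP[]]; lia.
right; case: (leqP (lo + t) m) => // long.
have hm : lo < m by lia.
have [i_dom i_rng] : 1 <= maxn lo (m.+1 - (t.+1 - t.+1 %/ 2)) <= n /\
    lo <= maxn lo (m.+1 - (t.+1 - t.+1 %/ 2)) < m by lia.
by case: (H2 _ i_dom i_rng); lia.
Qed.

Lemma dist_ge_ex_cut n t lo m : 1 <= lo -> m <= n ->
  dist_ge t lo m <-> (t <= 1 /\ dist_ge t lo m) \/
     (1 < t /\ exists i, 1 <= i <= n /\ lo < i < m /\
        dist_ge (t %/ 2) lo i /\ dist_ge (t - t %/ 2) i m).
Proof.
rewrite /dist_ge => lo_ge1 m_le; case: (leqP t 1) => t_le.
  by split=> [|[[]|[]]]; [left | | ]; lia.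
split=> [[t0|H]|[[]|[_ [i [_ [? [H1 H2]]]]]]]; try lia.
by right; split=> //; exists (lo + t %/ 2); lia.
Qed.

Definition FTrue : formula := FEq TMin TMin.
Definition FFalse : formula := FLt TMin TMin.
Definition FLe (x y : term) : formula := FNot (FLt y x).

Definition dist_atom (t : nat) (lo hi : term) : formula :=
  if t == 0 then FTrue else FLt lo hi.

Definition small_dist_atom (t : nat) (lo hi : term) : formula :=
  if t <= 1 then dist_atom t lo hi else FFalse.

Definition split_guard (t : nat) (lo x hi : term) : formula :=
  if 1 < t then FAnd (FLt lo x) (FLt x hi) else FFalse.

Definition all_step (D : term -> term -> term -> nat -> nat -> formula)
    (x lo m hi : term) (t1 t2 : nat) : formula :=
  FAnd (FAnd (dist_atom (minn t1 1) lo m) (dist_atom (minn t2 1) m hi))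
       (FAnd (FImp (FAnd (FLe lo x) (FLt x m)) (D lo x m (all_cut_l t1) (all_cut_r t1)))
             (FImp (FAnd (FLe m x) (FLt x hi)) (D m x hi (all_cut_l t2) (all_cut_r t2)))).

Definition ex_step (D : term -> term -> term -> nat -> nat -> formula)
    (x lo m hi : term) (t1 t2 : nat) : formula :=
  FOr (FOr (small_dist_atom t1 lo m) (small_dist_atom t2 m hi))
      (FOr (FAnd (split_guard t1 lo x m) (D lo x m (t1 %/ 2) (t1 - t1 %/ 2)))
           (FAnd (split_guard t2 m x hi) (D m x hi (t2 %/ 2) (t2 - t2 %/ 2)))).

(* Variable [k] is the cut point of level [k], shared by the intervals [lo, m] and [m, hi]. *)
Fixpoint dist_matrix (k : nat) (c : bool) (lo m hi : term) (t1 t2 : nat) : formula :=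
  if k is k'.+1 then
    (if c then all_step else ex_step) (dist_matrix k' (~~ c)) (TVar k) lo m hi t1 t2
  else (if c then FAnd else FOr) (dist_atom t1 lo m) (dist_atom t2 m hi).

Fixpoint dist_bound (k : nat) (c : bool) : nat :=
  if k is k'.+1 then (if c then 2 * dist_bound k' false - 1 else 2 * dist_bound k' true)
  else 1.

Definition dist_spec (c : bool) (t1 t2 lo m hi : nat) : Prop :=
  if c then dist_ge t1 lo m /\ dist_ge t2 m hi else dist_ge t1 lo m \/ dist_ge t2 m hi.

Lemma nquant_dist_matrix k c lo m hi t1 t2 : nquant (dist_matrix k c lo m hi t1 t2) = 0.
Proof.
have atom t x y : nquant (dist_atom t x y) = 0 by rewrite /dist_atom; case: eqP.
have small t x y : nquant (small_dist_atom t x y) = 0.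
  by rewrite /small_dist_atom; case: ifP.
have guard t x y u : nquant (split_guard t x y u) = 0 by rewrite /split_guard; case: ifP.
elim: k c lo m hi t1 t2 => [|k IH] [] lo m hi t1 t2 /=;
  by rewrite ?atom // /all_step /ex_step /= ?atom ?small ?guard ?IH.
Qed.

Lemma vars_in_dist_atom (P : pred nat) t lo hi :
  term_vars_in P lo -> term_vars_in P hi -> vars_in P (dist_atom t lo hi).
Proof. by rewrite /dist_atom; case: eqP => //= _ -> ->. Qed.

Lemma vars_in_dist_matrix (P : pred nat) k c lo m hi t1 t2 :
  (forall j, 0 < j <= k -> P j) -> term_vars_in P lo -> term_vars_in P m -> term_vars_in P hi ->
  vars_in P (dist_matrix k c lo m hi t1 t2).
Proof.
elim: k c lo m hi t1 t2 => [|k IH] c lo m hi t1 t2 Pk Plo Pm Phi.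
  by case: c => /=; rewrite !vars_in_dist_atom.
have Px : P k.+1 by apply: Pk; lia.
have {}IH c' x y u t1' t2' := IH c' x y u t1' t2' (fun j hj => Pk j (ltac:(lia))).
case: c => /=; rewrite /all_step /ex_step /small_dist_atom /split_guard /=.
  by rewrite !vars_in_dist_atom // Plo Pm Phi Px !IH.
by rewrite !IH //; do !case: ifP => _; rewrite /= ?vars_in_dist_atom ?Plo ?Pm ?Phi ?Px.
Qed.

Section DistanceSemantics.
Variables (n : nat) (z : n.-tuple bool).
Hypothesis n_gt0 : 0 < n.

Notation sat := (sat z).
Notation ev := (eval_term n).

Lemma eval_upd_above k i a t : term_vars_in (above k) t -> ev (upd a k i) t = ev a t.
Proof. by case: t => //= v; rewrite /above /upd => kv; case: eqP => // vk; lia. Qed.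

Lemma sat_dist_atom a t lo hi :
  t <= 1 -> sat a (dist_atom t lo hi) <-> dist_ge t (ev a lo) (ev a hi).
Proof. by rewrite /dist_atom /dist_ge /FTrue; case: eqP => [->|t0] /= t_le; split; lia. Qed.

Lemma sat_small_dist_atom a t lo hi :
  sat a (small_dist_atom t lo hi) <-> t <= 1 /\ dist_ge t (ev a lo) (ev a hi).
Proof.
rewrite /small_dist_atom; case: leqP => t_le; first by rewrite sat_dist_atom //; split=> [|[]].
by rewrite /=; split=> [|[]]; lia.
Qed.

Lemma sat_split_guard a t lo x hi :
  sat a (split_guard t lo x hi) <-> 1 < t /\ ev a lo < ev a x < ev a hi.
Proof. by rewrite /split_guard; case: ltnP => /= t_le; split; lia. Qed.

Lemma sat_between a lo x hi :
  sat a (FAnd (FLe lo x) (FLt x hi)) <-> ev a lo <= ev a x < ev a hi.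
Proof. by rewrite /=; split=> [[]|]; lia. Qed.

Definition dist_correct (k : nat) (c : bool) : Prop := forall lo m hi t1 t2 a,
  term_vars_in (above k) lo -> term_vars_in (above k) m -> term_vars_in (above k) hi ->
  1 <= ev a lo -> 1 <= ev a m <= n -> ev a hi <= n ->
  t1 <= dist_bound k c -> t2 <= dist_bound k c ->
  sat a (prefix (alt_block k c) (dist_matrix k c lo m hi t1 t2)) <->
  dist_spec c t1 t2 (ev a lo) (ev a m) (ev a hi).

Lemma dist_correct0 c : dist_correct 0 c.
Proof. by case: c => lo m hi t1 t2 a *; rewrite /= !sat_dist_atom. Qed.

Lemma dist_correct_all k : dist_correct k false -> dist_correct k.+1 true.
Proof.
move=> IH lo m hi t1 t2 a hlo hm hhi lo1 /andP[m1 mn] hin b1 b2 /=.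
have cut_bound t : t <= dist_bound k.+1 true ->
    all_cut_l t <= dist_bound k false /\ all_cut_r t <= dist_bound k false.
  by rewrite /= /all_cut_l /all_cut_r; case: (leqP t 1); lia.
have [l1 r1] := cut_bound _ b1; have [l2 r2] := cut_bound _ b2.
have hlo' := term_vars_in_above hlo; have hm' := term_vars_in_above hm.
have hhi' := term_vars_in_above hhi.
have hx : term_vars_in (above k) (TVar k.+1) by rewrite /= /above.
have sat_at i : 1 <= i <= n ->
    sat (upd a k.+1 i) (prefix (alt_block k false)
      (all_step (dist_matrix k false) (TVar k.+1) lo m hi t1 t2)) <->
    (dist_ge (minn t1 1) (ev a lo) (ev a m) /\ dist_ge (minn t2 1) (ev a m) (ev a hi)) /\
    (ev a lo <= i < ev a m ->
       dist_spec false (all_cut_l t1) (all_cut_r t1) (ev a lo) i (ev a m)) /\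
    (ev a m <= i < ev a hi ->
       dist_spec false (all_cut_l t2) (all_cut_r t2) (ev a m) i (ev a hi)).
  move=> i_dom; set b := upd a k.+1 i.
  have evb t : term_vars_in (above k.+1) t -> ev b t = ev a t by exact: eval_upd_above.
  have evx : ev b (TVar k.+1) = i by rewrite /= /b upd_eq.
  rewrite /all_step (@sat_prefix_guarded_and n z n_gt0); first last.
  - by move=> b'; rewrite !sat_between; lia.
  - by apply: avoids_alt_block; rewrite /= hm' hhi' /above ltnSn.
  - by apply: avoids_alt_block; rewrite /= hlo' hm' /above ltnSn.
  - by apply: avoids_alt_block; rewrite /= !vars_in_dist_atom.
  rewrite (IH lo (TVar k.+1) m) ?(IH m (TVar k.+1) hi) ?evx ?evb //.
  by rewrite !sat_between evx !evb //= !sat_dist_atom ?geq_minr // !evb.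
rewrite (dist_ge_all_cut t1 lo1 mn) (dist_ge_all_cut t2 m1 hin).
split=> [H | [[g1 f1] [g2 f2]] i i_dom].
  have [[g1 g2] _] := (sat_at 1 (one_in_dom n_gt0)).1 (H 1 (one_in_dom n_gt0)).
  split; split=> // i i_dom hh; have [_ [e1 e2]] := (sat_at i i_dom).1 (H i i_dom).
    exact: e1.
  exact: e2.
by apply/sat_at=> //; split=> //; split=> hh; [exact: f1 | exact: f2].
Qed.

Lemma dist_correct_ex k : dist_correct k true -> dist_correct k.+1 false.
Proof.
move=> IH lo m hi t1 t2 a hlo hm hhi lo1 /andP[m1 mn] hin b1 b2 /=.
have half_bound t : t <= dist_bound k.+1 false ->
    t %/ 2 <= dist_bound k true /\ t - t %/ 2 <= dist_bound k true by rewrite /=; lia.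
have [l1 r1] := half_bound _ b1; have [l2 r2] := half_bound _ b2.
have hlo' := term_vars_in_above hlo; have hm' := term_vars_in_above hm.
have hhi' := term_vars_in_above hhi.
have hx : term_vars_in (above k) (TVar k.+1) by rewrite /= /above.
have sat_at i : 1 <= i <= n ->
    sat (upd a k.+1 i) (prefix (alt_block k true)
      (ex_step (dist_matrix k true) (TVar k.+1) lo m hi t1 t2)) <->
    ((t1 <= 1 /\ dist_ge t1 (ev a lo) (ev a m)) \/ (t2 <= 1 /\ dist_ge t2 (ev a m) (ev a hi))) \/
    ((1 < t1 /\ ev a lo < i < ev a m) /\
       dist_spec true (t1 %/ 2) (t1 - t1 %/ 2) (ev a lo) i (ev a m)) \/
    ((1 < t2 /\ ev a m < i < ev a hi) /\
       dist_spec true (t2 %/ 2) (t2 - t2 %/ 2) (ev a m) i (ev a hi)).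
  move=> i_dom; set b := upd a k.+1 i.
  have evb t : term_vars_in (above k.+1) t -> ev b t = ev a t by exact: eval_upd_above.
  have evx : ev b (TVar k.+1) = i by rewrite /= /b upd_eq.
  rewrite /ex_step (@sat_prefix_guarded_or n z n_gt0); first last.
  - by move=> b'; rewrite !sat_split_guard; lia.
  - apply: avoids_alt_block; rewrite /split_guard; case: ifP => //= _.
    by rewrite hm' hhi' /above ltnSn.
  - apply: avoids_alt_block; rewrite /split_guard; case: ifP => //= _.
    by rewrite hlo' hm' /above ltnSn.
  - apply: avoids_alt_block; rewrite /small_dist_atom /=.
    by do !case: ifP => _; rewrite ?vars_in_dist_atom.
  rewrite (IH lo (TVar k.+1) m) ?(IH m (TVar k.+1) hi) ?evx ?evb //.
  by rewrite !sat_split_guard evx !evb //= !sat_small_dist_atom !evb.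
have one := one_in_dom n_gt0.
rewrite (dist_ge_ex_cut t1 lo1 mn) (dist_ge_ex_cut t2 m1 hin).
split=> [[i [i_dom /(sat_at i i_dom)]]|].
  case=> [[h|h]|[[[t_gt hh] s]|[[t_gt hh] s]]]; [left; left | right; left | | ] => //.
    by left; right; split=> //; exists i.
  by right; right; split=> //; exists i.
case=> [[h|[t_gt [i [i_dom [hh s]]]]]|[h|[t_gt [i [i_dom [hh s]]]]]].
- by exists 1; split=> //; apply/(sat_at 1 one); left; left.
- by exists i; split=> //; apply/(sat_at i i_dom); right; left.
- by exists 1; split=> //; apply/(sat_at 1 one); left; right.
- by exists i; split=> //; apply/(sat_at i i_dom); right; right.
Qed.

Lemma dist_correctP k c : dist_correct k c.
Proof.
elim: k c => [|k IH] c; first exact: dist_correct0.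
by case: c; [apply: dist_correct_all | apply: dist_correct_ex].
Qed.

End DistanceSemantics.

Definition letter_block (K : nat) : seq (bool * nat) := (false, K.+1) :: alt_block K true.

Definition FLetter (b : bool) (t : term) : formula := if b then FS t else FNot (FS t).

(* The 1-based position [q.+1], i.e. [nth false w q], carries the letter [b]. *)
Definition letter_matrix (n K q : nat) (b : bool) : formula :=
  FAnd (dist_matrix K true TMin (TVar K.+1) TMax q (n.-1 - q)) (FLetter b (TVar K.+1)).

Fixpoint selector_block (K L : nat) : seq (bool * nat) :=
  if L is L'.+1 then (true, K.+1 + L) :: selector_block K L' else [::].

Definition select (u : nat) (N1 N2 : formula) : formula :=
  FOr (FAnd (FEq (TVar u) TMin) N1) (FAnd (FNot (FEq (TVar u) TMin)) N2).

Fixpoint merge_matrix (K L : nat) (f : nat -> formula) : formula :=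
  if L is L'.+1 then
    select (K.+1 + L) (merge_matrix K L' f) (merge_matrix K L' (fun j => f (j + 2 ^ L')))
  else f 0.

Lemma sat_select n (z : n.-tuple bool) a u N1 N2 :
  sat z a (select u N1 N2) <-> sat z a (if a u == 1 then N1 else N2).
Proof.
rewrite /select /=; case: eqP => [-> | ne]; split.
- by case=> [[_ h]|[/(_ erefl)]].
- by left.
- by case=> [[/ne]|[_ h]].
- by right.
Qed.

Lemma mem_letter_block K (v : nat) : (v \in map snd (letter_block K)) = (0 < v <= K.+1).
Proof. by rewrite /= inE mem_alt_block; lia. Qed.

Lemma mem_selector_block K L (v : nat) :
  (v \in map snd (selector_block K L)) = (K.+1 < v <= K.+1 + L).
Proof. by elim: L => [|L IH] /=; rewrite ?in_nil ?inE ?IH; lia. Qed.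

Lemma size_selector_block K L : size (selector_block K L) = L.
Proof. by elim: L => //= L ->. Qed.

Lemma dist_ge_position n q i : q < n -> 1 <= i <= n ->
  dist_ge q 1 i /\ dist_ge (n.-1 - q) i n <-> i = q.+1.
Proof. by rewrite /dist_ge; lia. Qed.

Section Letters.
Variables (n : nat) (z : n.-tuple bool).
Hypothesis n_gt0 : 0 < n.

Notation sat := (sat z).

Lemma sat_FLetter a b t : sat a (FLetter b t) <-> nth false z (eval_term n a t).-1 = b.
Proof. by case: b => /=; case: (nth _ _ _); split. Qed.

Lemma sat_letter K q b a : q < n -> n.-1 <= dist_bound K true ->
  sat a (prefix (letter_block K) (letter_matrix n K q b)) <-> nth false z q = b.
Proof.
move=> q_lt K_big.
have x_above : above K K.+1 by rewrite /above.
have sat_at i : 1 <= i <= n ->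
    sat (upd a K.+1 i) (prefix (alt_block K true) (letter_matrix n K q b)) <->
    i = q.+1 /\ nth false z i.-1 = b.
  move=> i_dom; rewrite /letter_matrix (@sat_prefix_and n z n_gt0); last first.
    by apply: avoids_alt_block; case: b; rewrite /= /above.
  by rewrite sat_FLetter (@dist_correctP n z n_gt0) /=; rewrite ?upd_eq ?dist_ge_position //; lia.
split=> [[i [i_dom /(sat_at i i_dom) [-> //]]] | letter].
by exists q.+1; split; [lia | apply/sat_at; [lia | split]].
Qed.

Lemma sat_merge K L f a : (0 < L -> 1 < n) -> (forall j, vars_in (fun v => v <= K.+1) (f j)) ->
  sat a (prefix (selector_block K L ++ letter_block K) (merge_matrix K L f)) <->
  forall j, j < 2 ^ L -> sat a (prefix (letter_block K) (f j)).
Proof.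
elim: L f a => [|L IH] f a n_gt1 f_vars.
  by split=> [h j|h]; [rewrite expn0 ltnS leqn0 => /eqP -> | apply: h].
set u := K.+1 + L.+1.
have n_gt1' : 0 < L -> 1 < n by move=> _; apply: n_gt1.
have unused g i : vars_in (fun v => v <= K.+1) g ->
    sat (upd a u i) (prefix (letter_block K) g) <-> sat a (prefix (letter_block K) g).
  move=> g_vars; apply: sat_upd_unused; rewrite vars_in_prefix.
  by apply: vars_in_sub g_vars => v /=; rewrite /u; lia.
have sat_at i : sat (upd a u i) (prefix (selector_block K L ++ letter_block K)
      (select u (merge_matrix K L f) (merge_matrix K L (fun j => f (j + 2 ^ L))))) <->
    if i == 1 then forall j, j < 2 ^ L -> sat a (prefix (letter_block K) (f j))
    else forall j, j < 2 ^ L -> sat a (prefix (letter_block K) (f (j + 2 ^ L))).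
  rewrite (sat_prefix_congr (N' := if i == 1 then merge_matrix K L f
                                   else merge_matrix K L (fun j => f (j + 2 ^ L)))); last first.
    move=> b b_eq; rewrite sat_select b_eq ?upd_eq //.
    by rewrite !inE map_cat mem_cat mem_selector_block mem_letter_block /u; lia.
  by case: eqP => _; rewrite IH //; split=> h j j_lt; apply/(unused _ i); auto.
rewrite [X in X <-> _]/=.
split=> [H j j_lt | H i i_dom]; last first.
  apply/sat_at; case: eqP => _ j j_lt; apply: H; rewrite expnS; lia.
have n2 : 1 < n by exact: n_gt1.
case: (ltnP j (2 ^ L)) => j_small.
  by have /sat_at := H 1 ltac:(lia); rewrite eqxx => /(_ j j_small).
have /sat_at := H 2 ltac:(lia); rewrite /= => /(_ (j - 2 ^ L)); rewrite subnK //.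
by apply; move: j_lt; rewrite expnS; lia.
Qed.

End Letters.

Definition diff_pos n (w v : n.-tuple bool) : nat :=
  if [pick i : 'I_n | nth false w i != nth false v i] is Some i then val i else 0.

Lemma diff_pos_lt n (w v : n.-tuple bool) : 0 < n -> diff_pos w v < n.
Proof. by rewrite /diff_pos; case: pickP => // i _ _; exact: ltn_ord. Qed.

Lemma diff_posP n (w v : n.-tuple bool) :
  v != w -> nth false w (diff_pos w v) != nth false v (diff_pos w v).
Proof.
rewrite /diff_pos; case: pickP => // same /eqP[]; apply: val_inj.
apply: (eq_from_nth (x0 := false)); first by rewrite !size_tuple.
by move=> i; rewrite size_tuple => lt_in; have /negbFE/eqP := same (Ordinal lt_in).
Qed.

Lemma dist_bound_even j : 4 ^ j + 1 <= 2 * dist_bound (2 * j) true.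
Proof.
have pos k c : 0 < dist_bound k c.
  by elim: k c => [|k IH] [] //=; have := IH true; have := IH false; lia.
elim: j => [|j IH] //; rewrite (_ : 2 * j.+1 = (2 * j).+2) ?expnS /=; last lia.
by have := pos (2 * j) true; lia.
Qed.

Definition letter_depth (n : nat) : nat := 2 * ((trunc_log 2 n).+1./2 + 1).

Lemma letter_depth_le n : letter_depth n <= trunc_log 2 n + 3.
Proof. by rewrite /letter_depth; lia. Qed.

Lemma letter_depth_bound n : 0 < n -> n.-1 <= dist_bound (letter_depth n) true.
Proof.
move=> n_gt0; have := dist_bound_even ((trunc_log 2 n).+1./2 + 1).
have := trunc_log_ltn n (isT : 1 < 2).
have : 2 ^ (trunc_log 2 n).+2 <= 4 ^ ((trunc_log 2 n).+1./2 + 1).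
  by rewrite (_ : 4 = 2 ^ 2) // -expnM leq_pexp2l //; lia.
by rewrite /letter_depth !expnS; lia.
Qed.

Lemma INR_expn2 m : INR (2 ^ m) = pow 2 m.
Proof. by elim: m => [|m IH] //; rewrite expnS mulnE mult_INR IH /=; lra. Qed.

Lemma log2R_ge m N : 2 ^ m <= N -> (INR m <= log2R (INR N))%R.
Proof.
move=> le_N; rewrite /log2R.
have ln2_gt0 : (0 < ln 2)%R by have := ln_lt_2; lra.
have pow_le : (pow 2 m <= INR N)%R by rewrite -INR_expn2; apply/le_INR/leP.
have : (ln (pow 2 m) <= ln (INR N))%R.
  case/Rle_lt_or_eq_dec: pow_le => [lt|->]; last exact: Rle_refl.
  by apply/Rlt_le/ln_increasing => //; apply: pow_lt; lra.
rewrite ln_pow; last lra.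
by move=> h; apply: (Rmult_le_reg_r (ln 2)) => //; rewrite /Rdiv Rmult_assoc Rinv_l; lra.
Qed.

Lemma up_log_le_log2R N : 0 < N -> (INR (up_log 2 N) <= log2R (INR N) + 1)%R.
Proof.
move=> N_gt0; case: (ltnP 1 N) => [N_gt1 | N_le1].
  have := log2R_ge (ltnW (up_log_gtn (isT : 1 < 2) N_gt1)).
  have -> : up_log 2 N = (up_log 2 N).-1.+1 by rewrite prednK // up_log_gt0 N_gt1.
  by rewrite S_INR /=; lra.
have -> : up_log 2 N = 0 by apply/eqP; rewrite up_log_eq0 N_le1 orbT.
by have := @log2R_ge 0 N N_gt0; rewrite /=; lra.
Qed.

Lemma quantifier_count_le n N K : 0 < n -> 0 < N -> K <= trunc_log 2 n + 3 ->
  (INR (up_log 2 N + K.+1) <= log2R (INR n) + log2R (INR N) + 5)%R.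
Proof.
move=> n_gt0 N_gt0 K_le.
have := log2R_ge (trunc_logP (isT : 1 < 2) n_gt0); have := up_log_le_log2R N_gt0.
have : (INR K <= INR (trunc_log 2 n) + 3)%R.
  by rewrite (_ : 3%R = INR 3) -?plus_INR; [apply/le_INR/leP | rewrite /=; lra].
by rewrite plus_INR S_INR; lra.
Qed.

Lemma vars_in_letter_matrix (P : pred nat) n K q b :
  (forall j, 0 < j <= K.+1 -> P j) -> vars_in P (letter_matrix n K q b).
Proof.
move=> PK; have Px : P K.+1 by apply: PK; lia.
rewrite /= vars_in_dist_matrix //= => [|j j_le]; last by apply: PK; lia.
by case: b; rewrite /= Px.
Qed.

Lemma vars_in_merge_matrix (P : pred nat) K L f :
  (forall j, vars_in P (f j)) -> (forall j, 0 < j <= L -> P (K.+1 + j)) ->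
  vars_in P (merge_matrix K L f).
Proof.
elim: L f => [|L IH] f f_vars PL //=.
have PL' j : 0 < j <= L -> P (K.+1 + j) by move=> j_le; apply: PL; lia.
by rewrite !IH // PL //=; lia.
Qed.

Lemma nquant_merge_matrix K L f :
  (forall j, nquant (f j) = 0) -> nquant (merge_matrix K L f) = 0.
Proof. by elim: L f => [|L IH] f f0 //=; rewrite !IH. Qed.

(* Indices [j] past the end of [s] select [w] itself, whose test is harmless. *)
Definition separating_sentence n (w : n.-tuple bool) (s : seq (n.-tuple bool)) : formula :=
  prefix (selector_block (letter_depth n) (up_log 2 (size s)) ++ letter_block (letter_depth n))
    (merge_matrix (letter_depth n) (up_log 2 (size s))
       (fun j => letter_matrix n (letter_depth n) (diff_pos w (nth w s j))
                   (nth false w (diff_pos w (nth w s j))))).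

Lemma separating_sentence_closed n (w : n.-tuple bool) s : sentence (separating_sentence w s).
Proof.
set K := letter_depth n; set L := up_log 2 (size s).
have vars : vars_in (fun v => 0 < v <= K.+1 + L)
    (merge_matrix K L (fun j => letter_matrix n K (diff_pos w (nth w s j))
                                  (nth false w (diff_pos w (nth w s j))))).
  by apply: vars_in_merge_matrix => [j|j j_le]; [apply: vars_in_letter_matrix|]; lia.
rewrite /sentence free_vars_prefix; apply/eqP; rewrite -[_ == _]negbK -has_filter.
apply/hasPn => v /(free_vars_in vars) v_le.
by rewrite map_cat mem_cat mem_selector_block mem_letter_block negbK; lia.
Qed.

Lemma nquant_separating_sentence n (w : n.-tuple bool) s :
  nquant (separating_sentence w s) = up_log 2 (size s) + (letter_depth n).+1.
Proof.
rewrite nquant_prefix nquant_merge_matrix => [|j]; last first.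
  by rewrite /= nquant_dist_matrix; case: (nth false w _).
by rewrite size_cat size_selector_block /= size_alt_block addn0.
Qed.

Lemma models_separating_sentence n (w z : n.-tuple bool) s : 0 < n ->
  (0 < up_log 2 (size s) -> 1 < n) ->
  models z (separating_sentence w s) <->
  forall j, j < 2 ^ up_log 2 (size s) ->
    nth false z (diff_pos w (nth w s j)) = nth false w (diff_pos w (nth w s j)).
Proof.
move=> n_gt0 n_gt1; rewrite /models (@sat_merge n z n_gt0 _ _ _ _ n_gt1) => [|j].
  by split=> H j /H; rewrite sat_letter ?letter_depth_bound ?diff_pos_lt.
by apply: vars_in_letter_matrix => i; lia.
Qed.

Lemma n_gt1_of_up_log_card n (w : n.-tuple bool) (B : {set n.-tuple bool}) :
  w \notin B -> 0 < up_log 2 #|B| -> 1 < n.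
Proof.
move=> wB; rewrite up_log_gt0 /=; apply: contraTT; rewrite -!leqNgt => n_le1.
have : B \subset [set~ w].
  by apply/subsetP => v vB; rewrite in_setC1; apply: contraNneq wB => <-.
move/subset_leq_card; rewrite cardsC1 card_tuple card_bool.
have : 2 ^ n <= 2 ^ 1 by rewrite leq_pexp2l.
by rewrite expn1; move: (2 ^ n) #|B| => p b; lia.
Qed.

Theorem mainTheorem11 :
  exists C : R,
    forall (n : nat), 1 <= n ->
    forall (w : n.-tuple bool) (B : {set n.-tuple bool}),
      B != set0 -> w \notin B ->
      exists phi : formula,
        sentence phi /\
        (INR (nquant phi) <= log2R (INR n) + log2R (INR #|B|) + C)%R /\
        models w phi /\
        (forall w' : n.-tuple bool, w' \in B -> ~ models w' phi).
Proof.
exists 5%R => n n_gt0 w B B_ne wB.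
have size_s : size (enum B) = #|B| by rewrite cardE.
have n_gt1 : 0 < up_log 2 (size (enum B)) -> 1 < n by rewrite size_s; exact: n_gt1_of_up_log_card wB.
exists (separating_sentence w (enum B)); split; first exact: separating_sentence_closed.
split.
  rewrite nquant_separating_sentence size_s.
  by apply: quantifier_count_le; rewrite ?card_gt0 ?letter_depth_le.
split; first by apply/models_separating_sentence.
move=> w' w'B; rewrite (@models_separating_sentence n w w' (enum B) n_gt0 n_gt1).
have w'_ne : w' != w by apply: contraNneq wB => <-.
have idx : index w' (enum B) < 2 ^ up_log 2 (size (enum B)).
  by apply: leq_trans (up_logP _ (isT : 1 < 2)); rewrite index_mem mem_enum.
move=> /(_ _ idx) /eqP; rewrite nth_index ?mem_enum // eq_sym; apply/negP.
exact: diff_posP.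
Qed.
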